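(* Let $D$ be a Dyck path of semilength $n$ with column-area sequence $(c_1,\dots,c_{n+1})$, let $\mathcal D=\{k\in\{1,\dots,n\}: c_{k+1}=c_k-1\}$, and let $\pi$ be the permutation associated with $D$ by the Billey–Jockusch–Stanley bijection. Then $k\in\mathcal D$ if and only if $\pi(k)\le k$ (i.e. $k$ is a fixpoint or a deficiency of $\pi$).
   Context: Work in an $n\times n$ array of unit cells; the cell $(i,j)$ is the one in column $i$ (columns numbered $1,\dots,n$ from left to right) and row $j$ (rows numbered $1,\dots,n$ from bottom to top), i.e. the square $[i-1,i]\times[j-1,j]$. A Dyck path of semilength $n$ is a lattice path from $(0,0)$ to $(n,n)$ with unit north and east steps that never goes below the line $y=x$. Column-area sequence: for $1\le k\le n$, $c_k$ is the number of full cells in column $k$ strictly between the $k$-th east step of $D$ and the diagonal; equivalently, if the $k$-th east step lies at height $y_k$, then $c_k=y_k-k$; and $c_{n+1}=-1$. A valley of $D$ is an east step immediately followed by a north step; if the east step is the $k$-th east step and the north step is the $\ell$-th north step, the valley is at position $(k,\ell)$, the cell enclosed by these two steps. Billey–Jockusch–Stanley bijection: put a cross in every valley cell of $D$; then, for the columns $i=1,2,\dots,n$ in this order, if column $i$ does not yet contain a cross, put a cross in the lowest cell of column $i$ whose row does not yet contain a cross. The crosses form a permutation matrix, and $\pi(i)$ is the row of the cross in column $i$. An index $k$ is a fixpoint of $\pi$ if $\pi(k)=k$ and a deficiency if $\pi(k)<k$. *)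

From mathcomp Require Import all_boot all_order all_algebra.
Set Implicit Arguments. Unset Strict Implicit. Unset Printing Implicit Defensive.
Import GRing.Theory Num.Theory.

(* A lattice path is a word over bool: true = North step, false = East step. *)

Definition dyck (n : nat) (w : seq bool) : Prop :=
  [/\ size w = (2 * n)%N, count id w = n &
      forall i, i <= size w -> count negb (take i w) <= count id (take i w)].

Fixpoint east_heights (h : nat) (w : seq bool) : seq nat :=
  match w with
  | [::] => [::]
  | b :: w' => if b then east_heights h.+1 w' else h :: east_heights h w'
  end.

Definition east_height (w : seq bool) (k : nat) : nat :=
  nth 0 (east_heights 0 w) k.-1.

Definition col_area (n : nat) (w : seq bool) (k : nat) : int :=
  if k <= n then (Posz (east_height w k) - Posz k)%R else (-1)%R.

(* Valleys: an east step (the k-th) immediately followed by a north step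
   (the l-th) gives the valley cell (k, l) = (column, row).
   e = number of east steps so far, nn = number of north steps so far. *)
Fixpoint valleys (e nn : nat) (w : seq bool) : seq (nat * nat) :=
  match w with
  | [::] => [::]
  | b :: w' =>
      if b then valleys e nn.+1 w'
      else if w' is true :: _ then (e.+1, nn.+1) :: valleys e.+1 nn w'
           else valleys e.+1 nn w'
  end.

Definition bjs_step (n : nat) (cr : seq (nat * nat)) (i : nat) : seq (nat * nat) :=
  if has (fun p => p.1 == i) cr then cr
  else match ohead [seq r <- iota 1 n | all (fun p => p.2 != r) cr] with
       | Some r => rcons cr (i, r)
       | None => cr
       end.

Definition bjs_crosses (n : nat) (w : seq bool) : seq (nat * nat) :=
  foldl (bjs_step n) (valleys 0 0 w) (iota 1 n).

Definition bjs_perm (n : nat) (w : seq bool) (i : nat) : nat :=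
  let cr := bjs_crosses n w in (nth (0, 0) cr (find (fun p => p.1 == i) cr)).2.

From mathcomp Require Import all_boot all_order all_algebra zify.

(* The condition c_(k+1) = c_k - 1 says that the k-th and (k+1)-th east steps
   are at the same height, i.e. that column k contains no valley.  A valley in
   column k lies in row y_k + 1 > k, and since the crosses occupy distinct
   columns it is the cross of column k, so pi(k) > k.  Without a valley, a
   cross in a row <= k must lie in a column < k (valleys lie strictly above the
   diagonal, and the greedy phase has only treated columns < k), so at most
   k - 1 of the rows 1, ..., k are occupied and the greedy step picks a row <= k. *)

Lemma nth_find_fst_uniq {s : seq (nat * nat)} {k r} :
  uniq (map fst s) -> (k, r) \in s -> nth (0, 0) s (find (fun p => p.1 == k) s) = (k, r).
Proof.
elim: s => [|q s IH] //= /andP [qs Us]; rewrite inE => /orP [/eqP <- | kr_s].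
  by rewrite eqxx.
case: eqP => [qk | _]; last exact: IH.
by move: qs; rewrite qk (map_f fst kr_s).
Qed.

Lemma exists_free_row (cr : seq (nat * nat)) k : 0 < k -> uniq (map fst cr) ->
  (forall p, p \in cr -> p.2 <= k -> 0 < p.1 < k) ->
  exists2 r, r \in iota 1 k & all (fun p => p.2 != r) cr.
Proof.
move=> k_gt0 Ucr low_col; set S := [seq p <- cr | p.2 <= k].
have size_S : size S <= k.-1.
  have US : uniq (map fst S).
    exact: subseq_uniq (map_subseq fst (filter_subseq _ cr)) Ucr.
  have sub : {subset map fst S <= iota 1 k.-1}.
    move=> c /mapP [p]; rewrite mem_filter mem_iota => /andP [pk pcr] ->.
    by rewrite add1n prednK //; apply: low_col.
  by have := uniq_leq_size US sub; rewrite size_map size_iota.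
case: (boolP (all (fun r => r \in map snd S) (iota 1 k))) => [all_taken | ].
  have := uniq_leq_size (iota_uniq 1 k) (fun r => allP all_taken r).
  by rewrite size_iota size_map; lia.
move=> /allPn [r r_iota r_free]; exists r => //.
apply/allP => p p_cr; apply/eqP => pr; move/negP: r_free; apply; apply/mapP.
by exists p; rewrite // mem_filter p_cr pr; move: r_iota; rewrite mem_iota; lia.
Qed.

Lemma bjs_step_cat n cr i : exists s, bjs_step n cr i = cr ++ s.
Proof.
rewrite /bjs_step; case: ifP => _; first by exists [::]; rewrite cats0.
case: ohead => [r|]; first by exists [:: (i, r)]; rewrite cats1.
by exists [::]; rewrite cats0.
Qed.

Lemma foldl_bjs_step_cat n cr l : exists s, foldl (bjs_step n) cr l = cr ++ s.
Proof.
elim: l cr => [|i l IH] cr /=; first by exists [::]; rewrite cats0.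
have [s1 ->] := bjs_step_cat n cr i; have [s2 ->] := IH (cr ++ s1).
by exists (s1 ++ s2); rewrite catA.
Qed.

Lemma foldl_bjs_step_iota n {cr} i : uniq (map fst cr) ->
  exists F, [/\ foldl (bjs_step n) cr (iota 1 i) = cr ++ F,
                all (fun p => 0 < p.1 <= i) F & uniq (map fst (cr ++ F))].
Proof.
move=> Ucr; elim: i => [|i [F [E F_cols U]]]; first by exists [::]; rewrite cats0.
have -> : iota 1 i.+1 = iota 1 i ++ [:: i.+1] by rewrite -(addn1 i) iotaD add1n addn1.
rewrite foldl_cat E /= /bjs_step.
have F_cols' : all (fun p => 0 < p.1 <= i.+1) F.
  by apply/allP => p /(allP F_cols); lia.
case: ifP => col_taken; first by exists F.
case: ohead => [r|]; last by exists F.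
exists (rcons F (i.+1, r)); rewrite -rcons_cat all_rcons /= F_cols' map_rcons.
rewrite rcons_uniq U; split => //; rewrite ?andbT //.
by apply: contraFN col_taken => /mapP [p p_cr pi]; apply/hasP; exists p; rewrite -?pi.
Qed.

Lemma bjs_step_free_row {n cr k} : k <= n -> ~~ has (fun p => p.1 == k) cr ->
  (exists2 r, r \in iota 1 k & all (fun p => p.2 != r) cr) ->
  exists2 x, x <= k & bjs_step n cr k = rcons cr (k, x).
Proof.
move=> kn col_free [r r_iota r_free]; rewrite /bjs_step (negbTE col_free).
rewrite -(subnKC kn) iotaD add1n filter_cat.
set free := [seq _ <- iota 1 k | _].
have : r \in free by rewrite mem_filter r_free.
case: free (filter_subseq _ (iota 1 k) : subseq free _) => [|x t] //= sub _.
exists x => //; have := mem_subseq sub (mem_head x t).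
by rewrite mem_iota; lia.
Qed.

Lemma size_east_heights h w : size (east_heights h w) = count negb w.
Proof. by elim: w h => [|[] w IH] h //=; rewrite IH. Qed.

Lemma east_heights_ge h w x : x \in east_heights h w -> h <= x.
Proof.
elim: w h => [|[] w IH] h //=; first by move=> /IH; lia.
by rewrite inE => /orP [/eqP -> | /IH].
Qed.

Lemma nth_east_heights h w j : j < size (east_heights h w) ->
  exists i, [/\ i < size w, count negb (take i.+1 w) = j.+1 &
                nth 0 (east_heights h w) j = h + count id (take i.+1 w)].
Proof.
elim: w h j => [|[] w IH] h j //=.
  by move=> /IH [i [? ? ->]]; exists i.+1; split => //=; lia.
case: j => [_ | j /= /IH [i [? ? ->]]]; first by exists 0; rewrite take0 /= ?addn0.
by exists i.+1; split => //=; lia.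
Qed.

Lemma head_east_heights h w :
  (nth (h + count id w) (east_heights h w) 0 != h) = head false w.
Proof.
case: w => [|[] w] /=; first by rewrite addn0 eqxx.
  case E: (east_heights h.+1 w) => [|x t] /=; first by lia.
  have /east_heights_ge : x \in east_heights h.+1 w by rewrite E mem_head.
  lia.
by rewrite eqxx.
Qed.

(* The default [h + count id w] is the height of the end point: the last east
   step is followed by a north step iff it is not the final step of the path. *)
Lemma mem_valleys e h w p : p \in valleys e h w <->
  exists j, [/\ j < size (east_heights h w),
     p = (e + j.+1, (nth 0 (east_heights h w) j).+1) &
     nth (h + count id w) (east_heights h w) j.+1 != nth 0 (east_heights h w) j].
Proof.
elim: w e h p => [|[] w IH] e h p /=; first by split => // -[j []].
  by rewrite addnCA add1n; exact: IH.
have tail : (p \in valleys e.+1 h w) <-> exists j, [/\ j.+1 < (size (east_heights h w)).+1,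
     p = (e + j.+2, (nth 0 (east_heights h w) j).+1) &
     nth (h + count id w) (east_heights h w) j.+1 != nth 0 (east_heights h w) j].
  by rewrite IH; split => -[j [? pj ?]]; exists j; rewrite pj addSnnS.
have hd := head_east_heights h w.
have first_valley : (head false w /\ p = (e.+1, h.+1)) \/ p \in valleys e.+1 h w <->
                    p \in (if w is true :: _ then (e.+1, h.+1) :: valleys e.+1 h w
                           else valleys e.+1 h w).
  case: w {IH tail hd} => [|[] w] /=; rewrite ?inE.
  - by split => [[[]|] | ].
  - by split => [[[_ ->]|->] | /orP [/eqP|]]; rewrite ?eqxx ?orbT //; auto.
  - by split => [[[]|] | ]; auto.
rewrite -first_valley tail; split.
  case=> [[w_hd ->] | [j [? ? ?]]]; last by exists j.+1.
  by exists 0; rewrite hd addn1.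
case=> -[|j] [? pj ne]; last by right; exists j.
by left; rewrite -hd; move: pj; rewrite addn1.
Qed.

Lemma valleys_fst e h w :
  all (fun p => e < p.1) (valleys e h w) && uniq (map fst (valleys e h w)).
Proof.
elim: w e h => [|[] w IH] e h //=.
have /andP [cols U] := IH e.+1 h.
have cols' : all (fun p => e < p.1) (valleys e.+1 h w).
  by apply/allP => p /(allP cols); lia.
case: w {IH} cols U cols' => [|[] w] //= cols U cols'; last by rewrite cols' U.
rewrite ltnSn cols' U /= andbT.
by apply/negP => /mapP [p /(allP cols) /= + pe]; rewrite -pe ltnn.
Qed.

Lemma valley_bjs_crosses n {w p} : p \in valleys 0 0 w -> p \in bjs_crosses n w.
Proof.
move=> pV; rewrite /bjs_crosses.
by have [s ->] := foldl_bjs_step_cat n (valleys 0 0 w) (iota 1 n); rewrite mem_cat pV.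
Qed.

Lemma bjs_perm_cross {n w k r} : (k, r) \in bjs_crosses n w -> bjs_perm n w k = r.
Proof.
have /andP [_ UV] := valleys_fst 0 0 w.
have [F [E _ U]] := foldl_bjs_step_iota n n UV.
by rewrite /bjs_perm /bjs_crosses E => kr; rewrite (nth_find_fst_uniq U kr).
Qed.

Lemma bjs_perm_le n w k : 0 < k <= n ->
  (forall p, p \in valleys 0 0 w -> p.1 != k) ->
  (forall p, p \in valleys 0 0 w -> p.2 <= k -> p.1 < k) ->
  bjs_perm n w k <= k.
Proof.
move=> /andP [k_gt0 kn] no_valley low_valley; set V := valleys 0 0 w.
have /andP [V_cols UV] := valleys_fst 0 0 w.
have [F [E F_cols U]] := foldl_bjs_step_iota n k.-1 UV.
set P := foldl _ V _ in E.
have col_free : ~~ has (fun p => p.1 == k) P.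
  rewrite E has_cat negb_or; apply/andP; split; apply/hasPn => p.
    by move/no_valley.
  by move/(allP F_cols)/andP => [_]; apply: contraTneq => ->; rewrite -ltnNge ltn_predL.
have row_free : exists2 r, r \in iota 1 k & all (fun p => p.2 != r) P.
  apply: exists_free_row; rewrite ?E // => p; rewrite mem_cat => /orP [pV | pF] pk.
    by rewrite (allP V_cols p pV) low_valley.
  by case/andP: (allP F_cols p pF) => -> /leq_ltn_trans -> //; rewrite ltn_predL.
have [x xk Sx] := bjs_step_free_row kn col_free row_free.
have [s Es] : exists s, bjs_crosses n w = bjs_step n P k ++ s.
  rewrite /bjs_crosses; have -> : iota 1 n = iota 1 k.-1 ++ k :: iota k.+1 (n - k).
    by rewrite -{1}(_ : k.-1 + (n - k).+1 = n) ?iotaD /= ?add1n ?prednK //; lia.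
  by rewrite foldl_cat /=; apply: foldl_bjs_step_cat.
by rewrite (@bjs_perm_cross _ _ _ x) // Es Sx mem_cat mem_rcons mem_head.
Qed.

Section DyckPath.

Context {n : nat} {w : seq bool}.
Hypothesis dyck_w : dyck n w.

Local Notation heights := (east_heights 0 w).

Lemma size_heights : size heights = n.
Proof.
case: dyck_w => size_w count_w _; rewrite size_east_heights.
have := count_predC id w; rewrite size_w count_w.
by rewrite (_ : count (predC id) w = count negb w) //; lia.
Qed.

Lemma height_gt_index {j} : j < n -> j < nth 0 heights j.
Proof.
case: dyck_w => size_w _ above_diag jn.
have [|i [iw neg_i ->]] := @nth_east_heights 0 w j; first by rewrite size_heights.
by rewrite add0n -neg_i; apply: above_diag.
Qed.

Lemma mem_dyck_valleys p : p \in valleys 0 0 w <->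
  exists j, [/\ j < n, p = (j.+1, (nth 0 heights j).+1) & nth n heights j.+1 != nth 0 heights j].
Proof.
case: dyck_w => _ count_w _.
by rewrite mem_valleys size_heights add0n count_w; split => -[j [? ->]]; exists j.
Qed.

Lemma valley_above_diagonal {p} : p \in valleys 0 0 w -> p.1 < p.2.
Proof. by case/mem_dyck_valleys => j [jn -> _] /=; have := height_gt_index jn. Qed.

Lemma col_area_descent k : 1 <= k <= n ->
  (col_area n w k.+1 = (col_area n w k - 1)%R <-> nth n heights k = nth 0 heights k.-1).
Proof.
move=> /andP [k_gt0 kn]; rewrite /col_area /east_height kn.
case: (ltnP k n) => [kn' | nk].
  by rewrite /= (set_nth_default n 0) ?size_heights //; lia.
by rewrite (nth_default n) ?size_heights //; lia.
Qed.

End DyckPath.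

Theorem mainTheorem3 (n : nat) (w : seq bool) :
  dyck n w ->
  forall k : nat, 1 <= k <= n ->
    (col_area n w k.+1 = (col_area n w k - 1)%R <-> bjs_perm n w k <= k).
Proof.
move=> dyck_w k k_range; rewrite col_area_descent //.
have valley_col p : p \in valleys 0 0 w -> p.1 = k ->
    nth n (east_heights 0 w) k != nth 0 (east_heights 0 w) k.-1.
  by case/(mem_dyck_valleys dyck_w) => j [_ -> ne] /= <-.
split => [same_height | perm_le].
  apply: bjs_perm_le => // p pV.
    by apply/eqP => /(valley_col p pV); rewrite same_height eqxx.
  exact: leq_trans (valley_above_diagonal dyck_w pV).
apply/eqP; apply: contraTT perm_le => ne; rewrite -ltnNge.
set r := (nth 0 (east_heights 0 w) k.-1).+1.
have vk : (k, r) \in valleys 0 0 w.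
  by apply/(mem_dyck_valleys dyck_w); exists k.-1; rewrite prednK //; case/andP: k_range.
rewrite (bjs_perm_cross (valley_bjs_crosses n vk)).
by apply: (valley_above_diagonal dyck_w vk).
Qed.
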